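(* Let $Q \ll P$ be probability measures on a Polish space $\Omega$ with $r = dQ/dP$, and let $\epsilon \in (0,1]$. Let $Q'$ be any probability distribution on $\Omega$ such that $D_{TV}(Q', Q) \le \epsilon$. Then $\exp_2 D_\infty(Q'\|P) \ge S_P^{-1}(\epsilon)$.
   Context: Define $w_P(h) = \mathbb{P}_{X\sim P}[r(X) \ge h]$, $W_P(h) = \int_0^h w_P(\eta)\,d\eta$ and $S_P(h) = 1 - W_P(h)$. $S_P$ is strictly decreasing on $[0, \|r\|_\infty]$ with $S_P(0) = 1$, $S_P(\|r\|_\infty) = 0$, and $S_P^{-1} : [0,1] \to [0, \|r\|_\infty]$ denotes its inverse there ($\|\cdot\|_\infty$ is the $P$-essential supremum). $D_\infty(Q'\|P) = \log_2 \|dQ'/dP\|_\infty$ if $Q' \ll P$ and $+\infty$ otherwise; $\exp_2(x) = 2^x$. $D_{TV}(Q',Q) = \sup_B |Q'(B) - Q(B)|$. *)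

From HB Require Import structures.
From mathcomp Require Import all_boot all_order all_algebra.
From mathcomp Require Import all_classical all_reals all_analysis ess_sup_inf charge.
Set Implicit Arguments. Unset Strict Implicit. Unset Printing Implicit Defensive.
Import Order.TTheory GRing.Theory Num.Theory.
Import numFieldNormedType.Exports.
Local Open Scope classical_set_scope.
Local Open Scope ring_scope.
Local Open Scope ereal_scope.

Definition wP d (T : measurableType d) (R : realType)
  (P : probability T R) (r : T -> R) (h : R) : \bar R :=
  P [set x | (h <= r x)%R].

Definition WP d (T : measurableType d) (R : realType)
  (P : probability T R) (r : T -> R) (h : R) : \bar R :=
  \int[lebesgue_measure]_(eta in `[0%R, h]) wP P r eta.

Definition SP d (T : measurableType d) (R : realType)
  (P : probability T R) (r : T -> R) (h : R) : \bar R :=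
  1 - WP P r h.

Definition ess_norm d (T : measurableType d) (R : realType)
  (P : probability T R) (r : T -> R) : \bar R :=
  ess_sup P (EFin \o r).

Definition DTV d (T : measurableType d) (R : realType)
  (Q' Q : probability T R) : \bar R :=
  ereal_sup [set `|Q' B - Q B| | B in measurable].

(* exp_2 D_oo(Q'||P) = || dQ'/dP ||_oo (P-ess sup) if Q' << P, +oo otherwise *)
Definition exp2_Dinf d (T : measurableType d) (R : realType)
  (Q' P : probability T R) : \bar R :=
  match pselect (Q' `<< P) with
  | left _ => ess_sup P (Radon_Nikodym (charge_of_finite_measure Q') P)
  | right _ => +oo
  end.

From HB Require Import structures.
From mathcomp Require Import all_boot all_order all_algebra.
From mathcomp Require Import all_classical all_reals all_analysis ess_sup_inf charge.
From mathcomp Require Import measurable_realfun.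
Set Implicit Arguments. Unset Strict Implicit. Unset Printing Implicit Defensive.
Import Order.TTheory GRing.Theory Num.Theory.
Import numFieldNormedType.Exports.
Local Open Scope classical_set_scope.
Local Open Scope ring_scope.
Local Open Scope ereal_scope.

(* Suppose dQ'/dP has essential supremum below h and pick m in between, so that
   Q' <= m P.  On B = {r > m} the total variation bound gives
   Q(B) <= eps + m P(B), while Q(r <= m) + m P(B) = E_P[min(r^+, m)], which the
   layer-cake formula bounds by W_P(m).  Hence 1 <= eps + W_P(m), i.e.
   S_P(m) <= eps = S_P(h); but W_P is strictly increasing below ||r||_oo. *)

Lemma exists_EFin_between (R : realType) (x : \bar R) (y : R) :
  x < y%:E -> exists2 m : R, x < m%:E & (m < y)%R.
Proof.
case: x => [x||] //; last by exists (y - 1)%R; rewrite ?ltNyr // ltrBlDr ltrDl.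
by rewrite lte_fin => /midf_lt[xm my]; exists ((x + y) / 2)%R; rewrite ?lte_fin.
Qed.

Lemma measure_le_ess_sup_Radon_Nikodym d (T : measurableType d) (R : realType)
    (nu mu : {finite_measure set T -> \bar R}) (m : R) :
  nu `<< mu -> ess_sup mu (Radon_Nikodym (charge_of_finite_measure nu) mu) <= m%:E ->
  forall A, measurable A -> nu A <= m%:E * mu A.
Proof.
move=> numu /ess_supP[N [mN muN0 fN]] A mA.
pose nu' : {charge set T -> \bar R} := charge_of_finite_measure nu.
have intf : mu.-integrable A (Radon_Nikodym nu' mu).
  by apply: (integrableS measurableT) => //; exact: (@Radon_Nikodym_integrable _ _ _ nu').
have intm : mu.-integrable A (EFin \o cst m) by exact: finite_measure_integrable_cst.
have -> : nu A = \int[mu]_(x in A) Radon_Nikodym nu' mu x :=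
  @Radon_Nikodym_integral _ _ _ nu' _ _ numu mA.
rewrite -integral_cst //.
rewrite (negligible_integral mN mA intf muN0) (negligible_integral mN mA intm muN0).
have mAN : measurable (A `\` N) by exact: measurableD.
have sAN : A `\` N `<=` A by move=> x [].
apply: le_integral => //; [exact: integrableS intf | exact: integrableS intm |].
by move=> x /set_mem[_ Nx]; apply/negPn/negP => /negP fx; exact/Nx/fN.
Qed.

Lemma measure_le_add_DTV d (T : measurableType d) (R : realType)
    (Q' Q : probability T R) (B : set T) :
  measurable B -> Q B <= Q' B + DTV Q' Q.
Proof.
move=> mB; apply: (le_trans _ (leeD2l _ (_ : `|Q' B - Q B| <= DTV Q' Q))).
  rewrite -(fineK (fin_num_measure Q _ mB)) -(fineK (fin_num_measure Q' _ mB)).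
  by rewrite -EFinB abse_EFin -EFinD lee_fin -lerBlDl distrC ler_norm.
by apply: ereal_sup_ubound; exists B.
Qed.

Definition clip {R : realType} (m x : R) : R := Num.min (Num.max x 0%R) m.

Lemma clip_ge0 {R : realType} (m x : R) : (0 <= m)%R -> (0 <= clip m x)%R.
Proof. by move=> m0; rewrite le_min m0 le_max lexx orbT. Qed.

Section tail_integral.
Context d (T : measurableType d) (R : realType) (P : probability T R) (r : T -> R).
Hypothesis r_meas : measurable_fun setT r.

Let measurable_r_itv (i : interval R) : measurable (r @^-1` [set` i]).
Proof. by rewrite -[_ @^-1` _]setTI; exact: r_meas. Qed.

Let wPE s : wP P r s = P (r @^-1` `[s, +oo[).
Proof.
by rewrite /wP; congr (P _); apply/seteqP; split => x /=; rewrite in_itv/= andbT.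
Qed.

Lemma le_wP s t : (s <= t)%R -> wP P r t <= wP P r s.
Proof.
move=> st; rewrite !wPE; apply: le_measure; rewrite ?inE //.
by move=> x /=; rewrite !in_itv/= !andbT; exact: le_trans.
Qed.

Lemma measurable_wP : measurable_fun setT (wP P r).
Proof.
have wP_fin s : wP P r s \is a fin_num by rewrite wPE fin_num_measure.
apply: (eq_measurable_fun (EFin \o (fine \o wP P r))) => [s _|].
  by rewrite /= fineK.
apply/measurable_EFinP; apply: nonincreasing_measurable => // s t st.
by rewrite /= fine_le ?le_wP.
Qed.

Lemma measurable_clip m : measurable_fun setT (clip m \o r).
Proof. by apply: measurable_minr => //; exact: measurable_maxr. Qed.

Lemma integral_clip_le_WP m : (0 <= m)%R -> \int[P]_x (clip m (r x))%:E <= WP P r m.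
Proof.
move=> m0.
pose Y : {RV P >-> R} := mfun_Sub (mem_set (measurable_clip m) : clip m \o r \in mfun).
rewrite [leLHS](_ : _ = 'E_P[Y]); last by rewrite expectation_def.
rewrite ge0_expectation_ccdf; last by move=> x; exact: clip_ge0.
rewrite /WP integral_mkcond [leRHS]integral_mkcond.
apply: ge0_le_integral => //.
- by move=> s _; apply: erestrict_ge0 => ? _; exact: measure_ge0.
- by apply/(measurable_restrictT _ _).1 => //; exact: measurable_funTS (ccdf_measurable Y).
- by apply/(measurable_restrictT _ _).1 => //; exact: measurable_funTS measurable_wP.
move=> s _; rewrite !patchE.
case: ifPn => [/set_mem/= | _]; last by case: ifP => // _; exact: measure_ge0.
rewrite in_itv/= andbT => s0.
rewrite /ccdf /distribution /pushforward /=.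
case: ifPn => [/set_mem/= | /negP sm].
  rewrite in_itv/= => /andP[_ sm]; rewrite wPE; apply: le_measure; rewrite ?inE //.
    by rewrite -[_ @^-1` _]setTI; exact: measurable_clip.
  move=> x /=; rewrite !in_itv/= !andbT lt_min lt_max => /andP[/orP[/ltW //|]].
  by move=> /(le_lt_trans s0); rewrite ltxx.
rewrite (_ : _ @^-1` _ = set0) ?measure0 //; apply/seteqP; split => x //=.
rewrite in_itv/= andbT lt_min => /andP[_ ms]; apply: sm; apply/mem_set.
by rewrite /= in_itv/= s0 ltW.
Qed.

Lemma wP_gt0 c h : (c < h)%R -> h%:E <= ess_norm P r -> 0 < wP P r c.
Proof.
move=> ch hr; rewrite lt0e measure_ge0 andbT; apply/negP => /eqP wP0.
suff : ess_norm P r <= c%:E by move=> /(le_trans hr); rewrite lee_fin leNgt ch.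
apply/ess_supP; exists (r @^-1` `[c, +oo[); split => //; first by rewrite -wP0 wPE.
by move=> x /= /negP; rewrite lee_fin -ltNge in_itv/= andbT => /ltW.
Qed.

Lemma lt_WP m h : (0 <= m)%R -> (m < h)%R -> h%:E <= ess_norm P r ->
  WP P r h < +oo -> WP P r m < WP P r h.
Proof.
move=> m0 mh hr WPh_lty.
have mwP D : measurable D -> measurable_fun D (wP P r).
  by move=> mD; exact: measurable_funTS measurable_wP.
have WP_split : WP P r h = WP P r m + \int[lebesgue_measure]_(x in `]m, h]) wP P r x.
  rewrite /WP (@itv_bndbnd_setU _ _ _ (BRight m)) ?bnd_simp ?(ltW mh) //.
  apply: ge0_integral_setU => //; first by apply: mwP; exact: measurableU.
  apply/disj_setPS => x [/=]; rewrite !in_itv/= => /andP[_ xm] /andP[mx _].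
  by move: (le_lt_trans xm mx); rewrite ltxx.
have WPm_fin : WP P r m \is a fin_num.
  rewrite ge0_fin_numE; last by apply: integral_ge0 => x _.
  by rewrite (le_lt_trans _ WPh_lty) // WP_split leeDl // integral_ge0.
rewrite WP_split lteDl //.
have [mc ch] := midf_lt mh; set c := ((m + h) / 2)%R in mc ch.
apply: (@lt_le_trans _ _ (\int[lebesgue_measure]_(x in `]m, c]) wP P r c)).
  rewrite integral_cst //= lebesgue_measure_itv/= lte_fin mc -EFinD.
  by rewrite mule_gt0 ?lte_fin ?subr_gt0 // (wP_gt0 ch hr).
apply: (@le_trans _ _ (\int[lebesgue_measure]_(x in `]m, c]) wP P r x)).
  apply: ge0_le_integral => //; first exact: mwP.
  by move=> x; rewrite /= in_itv/= => /andP[_]; exact: le_wP.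
apply: ge0_subset_integral => //; first exact: mwP.
by apply: subset_itvl; rewrite bnd_simp ltW.
Qed.

Variable Q : probability T R.
Hypothesis r_density : forall A, measurable A -> Q A = \int[P]_(x in A) (r x)%:E.

Lemma density_lt0_null : Q (r @^-1` `]-oo, 0%R[) = 0.
Proof.
apply/eqP; rewrite eq_le measure_ge0 andbT r_density //.
under eq_integral => x do rewrite -[(r x)%:E]oppeK -EFinN.
rewrite (@integral_ge0N _ _ _ _ _ (fun x => (- r x)%:E)) ?oppe_le0; last first.
  by move=> x; rewrite /= in_itv/= lee_fin oppr_ge0 => /ltW.
by apply: integral_ge0 => x; rewrite /= in_itv/= lee_fin oppr_ge0 => /ltW.
Qed.

Lemma density_tail_le_WP m : (0 <= m)%R ->
  Q (r @^-1` `]-oo, m]) + m%:E * P (r @^-1` `]m, +oo[) <= WP P r m.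
Proof.
move=> m0.
have clip0 x : 0 <= (clip m (r x))%:E by rewrite lee_fin clip_ge0.
have mclip D : measurable_fun D (fun x => (clip m (r x))%:E).
  by apply: measurable_funTS; apply/measurable_EFinP; exact: measurable_clip.
have -> : Q (r @^-1` `]-oo, m]) = \int[P]_(x in r @^-1` `[0%R, m]) (clip m (r x))%:E.
  have -> : r @^-1` `]-oo, m] = r @^-1` `]-oo, 0%R[ `|` r @^-1` `[0%R, m].
    apply/seteqP; split => x /=; rewrite !in_itv/=.
      by move=> rm; have [r0|r0] := ltP (r x) 0%R; [left | right; apply/andP].
    by case=> [r0|/andP[]//]; exact: le_trans (ltW r0) m0.
  rewrite measureU //; last first.
    apply/seteqP; split => x //= []; rewrite !in_itv/= => r0 /andP[/(lt_le_trans r0)].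
    by rewrite ltxx.
  change (Q (r @^-1` `]-oo, 0%R[) + Q (r @^-1` `[0%R, m]) =
    \int[P]_(x in r @^-1` `[0%R, m]) (clip m (r x))%:E).
  rewrite density_lt0_null add0e r_density //; apply: eq_integral => x.
  by rewrite inE/= in_itv/= => /andP[r0 rm]; rewrite /clip max_l // min_l.
have -> : m%:E * P (r @^-1` `]m, +oo[) =
    \int[P]_(x in r @^-1` `]m, +oo[) (clip m (r x))%:E.
  rewrite -integral_cst //; apply: eq_integral => x.
  rewrite inE/= in_itv/= andbT => mr.
  by rewrite /clip max_l ?min_r ?ltW // (le_lt_trans m0).
rewrite -ge0_integral_setU //; last first.
  apply/disj_setPS => x [/=]; rewrite !in_itv/= andbT => /andP[_ rm] /(le_lt_trans rm).
  by rewrite ltxx.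
apply: le_trans (integral_clip_le_WP m0).
by apply: ge0_subset_integral => //; exact: measurableU.
Qed.

Lemma le_WP_add_DTV (Q' : probability T R) m : (0 <= m)%R ->
  (forall A, measurable A -> Q' A <= m%:E * P A) -> 1 <= WP P r m + DTV Q' Q.
Proof.
move=> m0 Q'_le; have mB := measurable_r_itv `]m, +oo[.
have <- : Q (r @^-1` `]-oo, m]) + Q (r @^-1` `]m, +oo[) = 1.
  rewrite -measureU //; last first.
    apply/seteqP; split => x //= []; rewrite !in_itv/= andbT => xm /(le_lt_trans xm).
    by rewrite ltxx.
  rewrite -[RHS](probability_setT Q); congr (Q _); apply/seteqP; split => x // _.
  by rewrite /= !in_itv/= andbT; case: leP => _; [left | right].
apply: le_trans (leeD2r _ (density_tail_le_WP m0)).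
rewrite -addeA leeD2l // (le_trans (measure_le_add_DTV Q' Q mB)) // leeD2r //.
exact: Q'_le.
Qed.
End tail_integral.

Theorem lemma1 (d : measure_display) (T : measurableType d) (R : realType)
  (P Q : probability T R) (r : T -> R)
  (r_meas : measurable_fun setT r)
  (r_density : forall A, measurable A -> Q A = \int[P]_(x in A) (r x)%:E)
  (eps : R) (eps_gt0 : (0 < eps)%R) (eps_le1 : (eps <= 1)%R)
  (Q' : probability T R) (hTV : DTV Q' Q <= eps%:E)
  (h : R) (h_ge0 : (0 <= h)%R) (h_le : h%:E <= ess_norm P r)
  (h_inv : SP P r h = eps%:E) :
  h%:E <= exp2_Dinf Q' P.
Proof.
rewrite /exp2_Dinf; case: pselect => [Q'P|_]; last by rewrite leey.
rewrite leNgt; apply/negP => /exists_EFin_between[m ess_sup_lt_m mh].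
have Q'_le : forall A, measurable A -> Q' A <= m%:E * P A :=
  measure_le_ess_sup_Radon_Nikodym Q'P (ltW ess_sup_lt_m).
have m0 : (0 <= m)%R.
  have := Q'_le _ measurableT; rewrite !probability_setT mule1 lee_fin.
  exact: le_trans ler01.
have WPh_fin : WP P r h \is a fin_num by move: h_inv; rewrite /SP; case: (WP P r h).
have WPh_lty : WP P r h < +oo by rewrite ltey_eq WPh_fin.
have WPm_lt := lt_WP r_meas m0 mh h_le WPh_lty.
have := le_WP_add_DTV r_meas r_density m0 Q'_le.
apply/negP; rewrite -ltNge; apply: (le_lt_trans (leeD2l _ hTV)).
apply: (lt_le_trans (lte_leD _ WPm_lt (lexx eps%:E))) => //.
by rewrite -h_inv /SP addeC subeK.
Qed.
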